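(* Let $p,q\in\mathbb N$ and $\bm P\in\{0,1\}^{p\times q}$ be such that every row and every column of $\bm P$ contains at most one entry equal to $1$. Then $\textsc{FindCounterpart}(\bm P)$ equals the zero vector $\bm 0\in\mathbb R^p$ if $\bm P$ is the zero matrix, and otherwise equals the leftmost column of $\bm P$ that contains an entry $1$.
   Context: $\textsc{FindCounterpart}(\bm P)$ for $\bm P\in\mathbb R^{p\times q}$ is computed as follows: let $\bm c\in\mathbb R^q$ with $c_j=\sum_{i=1}^pP_{ij}$ (column sums); replace $\bm c$ by its cumulative sum, $c_j\leftarrow\sum_{l=1}^jc_l$; apply elementwise the triangle window $\mathrm{tw}(x)=0$ if $x\le0$, $x$ if $0<x\le1$, $2-x$ if $1<x\le2$, $0$ if $x>2$; return the column vector $\bm P\bm c^\top\in\mathbb R^p$. *)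

From mathcomp Require Import all_boot all_order all_algebra.
Set Implicit Arguments. Unset Strict Implicit. Unset Printing Implicit Defensive.
Import Order.TTheory GRing.Theory Num.Theory.
Local Open Scope ring_scope.

Definition tw {R : realFieldType} (x : R) : R :=
  if x <= 0 then 0 else if x <= 1 then x else if x <= 2 then 2 - x else 0.

Definition find_counterpart {R : realFieldType} {p q : nat} (P : 'M[R]_(p, q))
  : 'cV[R]_p :=
  let colsum (l : 'I_q) := \sum_(i < p) P i l in
  let c := \row_(j < q) tw (\sum_(l < q | (l <= j)%N) colsum l) in
  P *m c^T.

Definition is01 {R : realFieldType} {p q : nat} (P : 'M[R]_(p, q)) : Prop :=
  forall i j, P i j = 0 \/ P i j = 1.

Definition at_most_one_per_line {R : realFieldType} {p q : nat}
  (P : 'M[R]_(p, q)) : Prop :=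
  (forall i j j', P i j = 1 -> P i j' = 1 -> j = j') /\
  (forall i i' j, P i j = 1 -> P i' j = 1 -> i = i').

From mathcomp Require Import all_boot all_order all_algebra.
Import Order.TTheory GRing.Theory Num.Theory.
Local Open Scope ring_scope.

(* For a 0/1 matrix with at most one 1 per column, every column sum is the
   indicator of that column being nonzero, so the cumulative sums are the
   numbers of nonzero columns up to each index and the triangle window sees
   only natural numbers, on which it is the indicator of 1.  The weight
   vector is therefore 1 at the first nonzero column and 0 at every later
   nonzero column, and multiplying by it extracts the first nonzero column. *)

Lemma tw_nat (R : realFieldType) (n : nat) : tw (n%:R : R) = (n == 1)%:R.
Proof.
rewrite /tw; case: n => [|[|[|n]]] /=; first by rewrite lexx.
- by rewrite ler10 lexx.
- by rewrite (ler_nat R 2 0) (ler_nat R 2 1) (ler_nat R 2 2) subrr.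
- by rewrite (ler_nat R n.+3 0) (ler_nat R n.+3 1) (ler_nat R n.+3 2).
Qed.

Lemma col_eq0P {R : nmodType} {p q : nat} (P : 'M[R]_(p, q)) (j : 'I_q) :
  reflect (forall i, P i j = 0) (col j P == 0).
Proof.
apply: (iffP eqP) => [Pj0 i | Pj0]; last by apply/colP => i; rewrite !mxE.
by have /colP/(_ i) := Pj0; rewrite !mxE.
Qed.

Lemma first_nonzero_col {R : nmodType} {p q : nat} {P : 'M[R]_(p, q)} :
  P != 0 ->
  exists j0 : 'I_q, col j0 P != 0 /\ forall l : 'I_q, (l < j0)%N -> col l P = 0.
Proof.
move=> Pn0; have [j Pj] : exists j, col j P != 0.
  apply/existsP; apply: contraNT Pn0; rewrite negb_exists => /forallP P0.
  by apply/eqP/matrixP => i j; rewrite mxE; apply/col_eq0P/negPn/P0.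
have [j0 Pj0 j0_min] := @arg_minnP _ j (fun l => col l P != 0) val Pj.
exists j0; split=> // l lt_l_j0; apply/eqP; apply: contraTT lt_l_j0.
by rewrite -leqNgt => /j0_min.
Qed.

Lemma mulmx_tr_weight_col {R : pzRingType} {p q : nat} (P : 'M[R]_(p, q))
    (c : 'rV[R]_q) (j0 : 'I_q) :
  c 0 j0 = 1 -> (forall j, j != j0 -> col j P != 0 -> c 0 j = 0) ->
  P *m c^T = col j0 P.
Proof.
move=> c_j0 c_other; apply/colP => i; rewrite !mxE (bigD1 j0) //= big1.
  by rewrite !mxE c_j0 mulr1 addr0.
move=> j ne_j_j0; rewrite mxE.
have [/eqP/col_eq0P -> | Pj] := eqVneq (col j P) 0; first by rewrite mul0r.
by rewrite c_other ?mulr0.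
Qed.

Lemma prefix_count_eq1 {q : nat} (b : pred 'I_q) {j0 j : 'I_q} :
  b j0 -> (forall l : 'I_q, (l < j0)%N -> ~~ b l) -> b j ->
  ((\sum_(l < q | (l <= j)%N) b l)%N == 1%N) = (j == j0).
Proof.
move=> b_j0 b_before b_j; have [-> | ne_j_j0] := eqVneq j j0.
  rewrite (bigD1 j0) //= b_j0 big1 // => l /andP [le_l_j0 ne_l_j0].
  by apply/eqP; rewrite eqb0 b_before // ltn_neqAle ne_l_j0.
have lt_j0_j : (j0 < j)%N.
  by rewrite ltn_neqAle eq_sym ne_j_j0 leqNgt; apply: contraL b_j => /b_before.
rewrite (bigD1 j) //= (bigD1 j0) /=; last by rewrite (ltnW lt_j0_j) eq_sym.
by rewrite b_j b_j0.
Qed.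

Section ZeroOneColumns.

Context {R : realFieldType} {p q : nat} {P : 'M[R]_(p, q)}.
Hypothesis P01 : is01 P.
Hypothesis col_one_uniq : forall i i' j, P i j = 1 -> P i' j = 1 -> i = i'.

Lemma col_neq0_one (l : 'I_q) : col l P != 0 -> exists i, P i l = 1.
Proof.
move=> Pl; have /existsP [i Pil] : [exists i, P i l != 0].
  apply: contraNT Pl; rewrite negb_exists => /forallP Pl0.
  by apply/col_eq0P => i; apply/eqP/negPn/Pl0.
by exists i; case: (P01 i l) Pil => ->; rewrite ?eqxx.
Qed.

Lemma sum_col01 (l : 'I_q) : \sum_(i < p) P i l = (col l P != 0)%:R.
Proof.
have [/eqP/col_eq0P Pl0 | /col_neq0_one [i0 Pi0]] := eqVneq (col l P) 0.
  by rewrite big1.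
rewrite (bigD1 i0) //= Pi0 big1 ?addr0 // => i ne_i_i0.
by case: (P01 i l) => // Pil; case/eqP: ne_i_i0; apply: col_one_uniq Pi0.
Qed.

Lemma find_counterpartE :
  find_counterpart P =
  P *m (\row_(j < q) ((\sum_(l < q | (l <= j)%N) (col l P != 0%R))%N == 1%N)%:R)^T.
Proof.
congr (P *m _^T); apply/rowP => j; rewrite !mxE -tw_nat natr_sum.
by congr tw; apply: eq_bigr => l _; rewrite sum_col01.
Qed.

End ZeroOneColumns.

Theorem proposition7 (R : realFieldType) (p q : nat) (P : 'M[R]_(p, q)) :
  is01 P -> at_most_one_per_line P ->
  (P = 0 -> find_counterpart P = 0) /\
  (P <> 0 ->
   exists j : 'I_q,
     (exists i, P i j = 1) /\
     (forall l : 'I_q, (l < j)%N -> forall i, P i l = 0) /\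
     find_counterpart P = col j P).
Proof.
move=> P01 [_ col_one_uniq]; split=> [-> | /eqP Pn0].
  by rewrite /find_counterpart mul0mx.
have [j0 [Pj0 before_j0]] := first_nonzero_col Pn0.
exists j0; split; first exact: col_neq0_one.
split; first by move=> l /before_j0/eqP/col_eq0P.
pose nonzero_col := [pred l | col l P != 0].
have before_zero (l : 'I_q) : (l < j0)%N -> ~~ nonzero_col l.
  by rewrite inE negbK => /before_j0 ->.
rewrite (find_counterpartE P01 col_one_uniq); apply: mulmx_tr_weight_col => [|j ne_j_j0 Pj].
  by rewrite mxE (prefix_count_eq1 nonzero_col Pj0 before_zero Pj0) eqxx.
by rewrite mxE (prefix_count_eq1 nonzero_col Pj0 before_zero Pj) (negbTE ne_j_j0).
Qed.
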